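(* Let $L_1,L_2\ge 1$ be integers, $S=\{0,1,\dots,L_1\}\times\{0,1,\dots,L_2\}$, $N=\{-1,0,1\}^2$, and let $R$ be a discrete-time Markov chain on $S$ with transition probabilities $p(n,n+u)$, $u\in N$, where $p(n,n+u)=0$ whenever $n+u\notin S$. Let $F:S\to[0,\infty)$ and define $F^0\equiv 0$ and, for $t\ge 0$, $F^{t+1}(n)=F(n)+\sum_{u\in N}p(n,n+u)F^{t}(n+u)$. Let $e_1=(1,0)$, $e_2=(0,1)$, and for $s\in\{1,2\}$ and $n\in S$ with $n+e_s\in S$ set $D^t_s(n)=F^t(n+e_s)-F^t(n)$. Assume that there are real constants $c_{s,n,v,u}$ ($s,v\in\{1,2\}$, $n\in S$ with $n+e_s\in S$, $u\in N$), with $c_{s,n,v,u}=0$ whenever $n+u+e_v\notin S$ or $n+u\notin S$, such that for all $t\ge 0$, all $s\in\{1,2\}$ and all $n$ with $n+e_s\in S$, $$D^{t+1}_s(n)=F(n+e_s)-F(n)+\sum_{v=1}^{2}\sum_{u\in N}c_{s,n,v,u}\,D^t_v(n+u).$$ Suppose that functions $A_s,B_s$ (defined on $\{n\in S: n+e_s\in S\}$, $s=1,2$) take values in $[0,\infty)$ and satisfy, for all $s\in\{1,2\}$ and all $n$ with $n+e_s\in S$, $$F(n+e_s)-F(n)+\sum_{v=1}^{2}\sum_{u\in N}\max\{-c_{s,n,v,u}A_v(n+u),\;c_{s,n,v,u}B_v(n+u)\}\le B_s(n),$$ $$F(n)-F(n+e_s)+\sum_{v=1}^{2}\sum_{u\in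 N}\max\{-c_{s,n,v,u}B_v(n+u),\;c_{s,n,v,u}A_v(n+u)\}\le A_s(n),$$ where terms with $c_{s,n,v,u}=0$ are taken to be $0$. Then for all $t\ge 0$, $s\in\{1,2\}$ and $n$ with $n+e_s\in S$, $$-A_s(n)\le D^t_s(n)\le B_s(n).$$
   Context: $F^t(n)$ is the expected cumulative reward over $t$ steps of the chain started in $n$ with one-step reward $F$; the differences $D^t_s(n)$ are called bias terms. *)

From Stdlib Require Import Reals Lra Lia ZArith List.
Import ListNotations.
Open Scope R_scope.

Definition padd (a b : Z * Z) : Z * Z := ((fst a + fst b)%Z, (snd a + snd b)%Z).

Definition inS (L1 L2 : Z) (n : Z * Z) : Prop :=
  (0 <= fst n <= L1)%Z /\ (0 <= snd n <= L2)%Z.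

Definition Nset : list (Z * Z) :=
  [(-1,-1); (-1,0); (-1,1); (0,-1); (0,0); (0,1); (1,-1); (1,0); (1,1)]%Z.

Definition sumL {A : Type} (l : list A) (f : A -> R) : R :=
  fold_right (fun x acc => f x + acc) 0 l.

Definition e (s : nat) : Z * Z := if Nat.eqb s 1 then (1%Z, 0%Z) else (0%Z, 1%Z).

Definition Sidx : list nat := [1%nat; 2%nat].

Fixpoint Ft (p : Z * Z -> Z * Z -> R) (F : Z * Z -> R) (t : nat) (n : Z * Z) : R :=
  match t with
  | O => 0
  | S t' => F n + sumL Nset (fun u => p n (padd n u) * Ft p F t' (padd n u))
  end.

Definition D (p : Z * Z -> Z * Z -> R) (F : Z * Z -> R) (t : nat) (s : nat) (n : Z * Z) : R :=
  Ft p F t (padd n (e s)) - Ft p F t n.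

(* The box [-A, B] is invariant under one step of the affine recursion for the
   bias terms: each term [c * D] of the recursion is bounded above by
   [max(-c A, c B)] and below by [-max(-c B, c A)], whatever the sign of [c],
   so the two hypotheses on [A] and [B] say exactly that the image of the box
   lies in the box.  Since [D^0 = 0] lies in it, induction on [t] concludes. *)
From Stdlib Require Import Reals ZArith List Lra Psatz Classical.
Open Scope R_scope.

Lemma sumL_le {X : Type} (l : list X) (f g : X -> R) :
  (forall x, In x l -> f x <= g x) -> sumL l f <= sumL l g.
Proof.
  induction l as [|a l IH]; simpl; intros Hfg; [lra|].
  assert (f a <= g a) by (apply Hfg; left; reflexivity).
  assert (sumL l f <= sumL l g) by (apply IH; intros; apply Hfg; right; assumption).
  lra.
Qed.

Lemma sumL_opp {X : Type} (l : list X) (f : X -> R) :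
  sumL l (fun x => - f x) = - sumL l f.
Proof. induction l as [|a l IH]; simpl; [lra | rewrite IH; lra]. Qed.

Lemma Rmult_le_Rmax_interval c d a b :
  (c <> 0 -> - a <= d <= b) -> c * d <= Rmax (- c * a) (c * b).
Proof.
  intros Hd. destruct (Req_dec c 0) as [->|Hc].
  - rewrite Rmax_left; lra.
  - specialize (Hd Hc). destruct (Rle_dec 0 c).
    + eapply Rle_trans; [|apply Rmax_r]. nra.
    + eapply Rle_trans; [|apply Rmax_l]. nra.
Qed.

Lemma Ropp_mult_le_Rmax_interval c d a b :
  (c <> 0 -> - a <= d <= b) -> - (c * d) <= Rmax (- c * b) (c * a).
Proof.
  intros Hd.
  assert (Hneg : - c * d <= Rmax (- - c * a) (- c * b)).
  { apply Rmult_le_Rmax_interval. intros Hc. apply Hd. lra. }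
  rewrite Rmax_comm. replace (- - c * a) with (c * a) in Hneg by ring. lra.
Qed.

Section BiasBounds.

Variables (L1 L2 : Z) (g : nat -> Z * Z -> R) (d : nat -> nat -> Z * Z -> R).
Variables (c : nat -> Z * Z -> nat -> Z * Z -> R) (A B : nat -> Z * Z -> R).

Hypothesis d_0 : forall s n, d 0%nat s n = 0.

Hypothesis c_support : forall s n v u, In s Sidx -> inS L1 L2 n ->
  inS L1 L2 (padd n (e s)) -> In v Sidx -> In u Nset ->
  (~ inS L1 L2 (padd (padd n u) (e v)) \/ ~ inS L1 L2 (padd n u)) -> c s n v u = 0.

Hypothesis d_S : forall t s n, In s Sidx -> inS L1 L2 n -> inS L1 L2 (padd n (e s)) ->
  d (S t) s n = g s n + sumL Sidx (fun v => sumL Nset (fun u => c s n v u * d t v (padd n u))).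

Hypothesis A_ge0 : forall s n, In s Sidx -> inS L1 L2 n -> inS L1 L2 (padd n (e s)) ->
  0 <= A s n.
Hypothesis B_ge0 : forall s n, In s Sidx -> inS L1 L2 n -> inS L1 L2 (padd n (e s)) ->
  0 <= B s n.

Hypothesis B_step : forall s n, In s Sidx -> inS L1 L2 n -> inS L1 L2 (padd n (e s)) ->
  g s n + sumL Sidx (fun v => sumL Nset (fun u =>
    Rmax (- c s n v u * A v (padd n u)) (c s n v u * B v (padd n u)))) <= B s n.
Hypothesis A_step : forall s n, In s Sidx -> inS L1 L2 n -> inS L1 L2 (padd n (e s)) ->
  - g s n + sumL Sidx (fun v => sumL Nset (fun u =>
    Rmax (- c s n v u * B v (padd n u)) (c s n v u * A v (padd n u)))) <= A s n.

Lemma c_neq0_inS s n v u : In s Sidx -> inS L1 L2 n -> inS L1 L2 (padd n (e s)) ->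
  In v Sidx -> In u Nset -> c s n v u <> 0 ->
  inS L1 L2 (padd n u) /\ inS L1 L2 (padd (padd n u) (e v)).
Proof.
  intros Hs Hn Hns Hv Hu Hc.
  split; apply NNPP; intros Hout; apply Hc, c_support; auto.
Qed.

Lemma d_bounds t : forall s n, In s Sidx -> inS L1 L2 n -> inS L1 L2 (padd n (e s)) ->
  - A s n <= d t s n <= B s n.
Proof.
  induction t as [|t IH]; intros s n Hs Hn Hns.
  - rewrite d_0. pose proof (A_ge0 s n Hs Hn Hns). pose proof (B_ge0 s n Hs Hn Hns). lra.
  - assert (IH_neighbour : forall v u, In v Sidx -> In u Nset -> c s n v u <> 0 ->
              - A v (padd n u) <= d t v (padd n u) <= B v (padd n u)).
    { intros v u Hv Hu Hc.
      destruct (c_neq0_inS s n v u Hs Hn Hns Hv Hu Hc). apply IH; assumption. }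
    assert (Hupper : sumL Sidx (fun v => sumL Nset (fun u => c s n v u * d t v (padd n u)))
      <= sumL Sidx (fun v => sumL Nset (fun u =>
           Rmax (- c s n v u * A v (padd n u)) (c s n v u * B v (padd n u))))).
    { apply sumL_le; intros v Hv; apply sumL_le; intros u Hu.
      apply Rmult_le_Rmax_interval, IH_neighbour; assumption. }
    assert (Hlower : - sumL Sidx (fun v => sumL Nset (fun u => c s n v u * d t v (padd n u)))
      <= sumL Sidx (fun v => sumL Nset (fun u =>
           Rmax (- c s n v u * B v (padd n u)) (c s n v u * A v (padd n u))))).
    { rewrite <- sumL_opp. apply sumL_le; intros v Hv. rewrite <- sumL_opp.
      apply sumL_le; intros u Hu.
      apply Ropp_mult_le_Rmax_interval, IH_neighbour; assumption. }
    rewrite d_S by assumption.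
    pose proof (B_step s n Hs Hn Hns). pose proof (A_step s n Hs Hn Hns). lra.
Qed.

End BiasBounds.

Theorem mainTheorem1
  (L1 L2 : Z) (HL1 : (1 <= L1)%Z) (HL2 : (1 <= L2)%Z)
  (p : Z * Z -> Z * Z -> R)
  (Hp_nonneg : forall n u, inS L1 L2 n -> In u Nset -> 0 <= p n (padd n u))
  (Hp_sum : forall n, inS L1 L2 n -> sumL Nset (fun u => p n (padd n u)) = 1)
  (Hp_out : forall n u, inS L1 L2 n -> In u Nset -> ~ inS L1 L2 (padd n u) ->
              p n (padd n u) = 0)
  (F : Z * Z -> R) (HF : forall n, inS L1 L2 n -> 0 <= F n)
  (c : nat -> Z * Z -> nat -> Z * Z -> R)
  (Hc_zero : forall s n v u, In s Sidx -> inS L1 L2 n -> inS L1 L2 (padd n (e s)) ->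
              In v Sidx -> In u Nset ->
              (~ inS L1 L2 (padd (padd n u) (e v)) \/ ~ inS L1 L2 (padd n u)) ->
              c s n v u = 0)
  (Hrec : forall t s n, In s Sidx -> inS L1 L2 n -> inS L1 L2 (padd n (e s)) ->
              D p F (S t) s n =
              F (padd n (e s)) - F n +
              sumL Sidx (fun v => sumL Nset (fun u => c s n v u * D p F t v (padd n u))))
  (A B : nat -> Z * Z -> R)
  (HA : forall s n, In s Sidx -> inS L1 L2 n -> inS L1 L2 (padd n (e s)) -> 0 <= A s n)
  (HB : forall s n, In s Sidx -> inS L1 L2 n -> inS L1 L2 (padd n (e s)) -> 0 <= B s n)
  (HBineq : forall s n, In s Sidx -> inS L1 L2 n -> inS L1 L2 (padd n (e s)) ->
              F (padd n (e s)) - F n +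
              sumL Sidx (fun v => sumL Nset (fun u =>
                Rmax (- c s n v u * A v (padd n u)) (c s n v u * B v (padd n u))))
              <= B s n)
  (HAineq : forall s n, In s Sidx -> inS L1 L2 n -> inS L1 L2 (padd n (e s)) ->
              F n - F (padd n (e s)) +
              sumL Sidx (fun v => sumL Nset (fun u =>
                Rmax (- c s n v u * B v (padd n u)) (c s n v u * A v (padd n u))))
              <= A s n) :
  forall t s n, In s Sidx -> inS L1 L2 n -> inS L1 L2 (padd n (e s)) ->
    - A s n <= D p F t s n <= B s n.
Proof.
  intros t.
  apply (d_bounds L1 L2 (fun s n => F (padd n (e s)) - F n) (D p F) c A B);
    try assumption.
  - intros s n. unfold D; simpl. lra.
  - intros s n Hs Hn Hns. replace (- (F (padd n (e s)) - F n)) with (F n - F (padd n (e s)))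
      by ring. apply HAineq; assumption.
Qed.
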